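(* If $[\gamma]\in J_1$ and $e([\gamma])=0$, then there exists $f\in F^\times$ with $[\gamma]=[f]$ in $J$.
   Context: $p$ odd prime; $F$ a field containing a primitive $p$th root of unity $\xi_p$; $K=F(\sqrt[p]{a})$, $a\in F^\times$, cyclic of degree $p$; $G=\mathrm{Gal}(K/F)=\langle\sigma\rangle$ with $\sigma(\sqrt[p]{a})=\xi_p\sqrt[p]{a}$; $\rho=\sigma-1$. $J=K^\times/K^{\times p}$ as a multiplicative $\mathbb{F}_p[G]$-module, $[\gamma]$ the class of $\gamma$; $J_i=\ker(\rho^i)$. For $[\gamma]\in J_{p-1}$, the index $e([\gamma])\in\mathbb{F}_p$ is defined by $\xi_p^{e([\gamma])}=\sigma(\delta)/\delta$ where $\delta\in K$ is any $p$th root of $N_{K/F}(\gamma)$ (which lies in $K$). *)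

From HB Require Import structures.
From mathcomp Require Import all_boot all_order all_algebra all_fingroup all_field.
Set Implicit Arguments. Unset Strict Implicit. Unset Printing Implicit Defensive.
Import GRing.Theory.
Local Open Scope ring_scope.

(* Setting: K/F a splitting field extension (K = F(a^(1/p)), cyclic of degree p),
   sigma : gal_of {:K} a generator of Gal(K/F).
   J = K^x / K^x^p; elements of K^x are nonzero gamma : K, [gamma] its class. *)

Section Defs.
Variables (F : fieldType) (K : splittingFieldType F).

Definition Jeq (p : nat) (x y : K) : Prop :=
  exists k : K, k != 0 /\ x = y * k ^+ p.

(* [gamma] \in J_1 = ker(rho), rho = sigma - 1 :  [sigma gamma / gamma] = 1 in J,
   i.e. [sigma gamma] = [gamma]. *)
Definition in_J1 (p : nat) (sigma : gal_of {:K}) (gamma : K) : Prop :=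
  Jeq p (sigma gamma) gamma.

Definition normKF (gamma : K) : K := galNorm 1 {:K} gamma.

(* e([gamma]) = e  (e taken as a natural number representing an element of F_p):
   xi^e = sigma(delta)/delta for a p-th root delta in K of N_{K/F}(gamma). *)
Definition index_is (p : nat) (xi : F) (sigma : gal_of {:K}) (gamma : K) (e : nat)
  : Prop :=
  exists delta : K, delta != 0 /\ delta ^+ p = normKF gamma /\
                    sigma delta = (xi ^+ e)%:A * delta.
End Defs.

From HB Require Import structures.
From mathcomp Require Import all_boot all_order all_algebra all_fingroup all_field.
From mathcomp Require Import cyclic.
Set Implicit Arguments.
Unset Strict Implicit.
Unset Printing Implicit Defensive.
Import GRing.Theory.
Local Open Scope ring_scope.

(* Write sigma(gamma) = gamma k^p and P_i = k sigma(k) ... sigma^(i-1)(k). Then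
   sigma^i(gamma) = gamma P_i^p, so delta' = gamma P_0 ... P_(p-1) is a p-th root
   of N(gamma) with sigma(delta')/delta' = P_p = N(k) (norm_root below).  Any other p-th root of
   N(gamma) differs from delta' by a p-th root of unity, which lies in F, so
   e([gamma]) = 0 forces N(k) = 1.  Hilbert 90 writes k = b / sigma(b), and then
   gamma b^p is fixed by sigma, i.e. lies in F. *)

Lemma prod_cycle (gT : finGroupType) (R : comNzRingType) (s : gT) (G : gT -> R) :
  \prod_(y in <[s]>%g) G y = \prod_(i < #[s]%g) G (s ^+ i)%g.
Proof.
have -> : <[s]>%g = [set (s ^+ val i)%g | i : 'I_#[s]%g].
  apply/setP=> y; apply/idP/imsetP => [/cyclePmin[i lti ->] | [i _ ->]].
    by exists (Ordinal lti).
  exact: mem_cycle.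
by rewrite big_imset // => i j _ _ /eqP; rewrite eq_expg_ord // => /eqP.
Qed.

Section CyclicGalois.
Variables (F : fieldType) (K : splittingFieldType F) (sigma : gal_of {:K}).

Lemma gal_expgSr i x : (sigma ^+ i.+1)%g x = sigma ((sigma ^+ i)%g x).
Proof. by rewrite expgSr galM ?memvf. Qed.

Lemma gal_fix_unity_root n (xi : F) (c : K) :
  n.-primitive_root xi -> c ^+ n = 1 -> sigma c = c.
Proof.
rewrite -(fmorph_primitive_root (in_alg K)) => prim_xi /(prim_rootP prim_xi)[i ->].
by rewrite -rmorphXn /= rmorph_alg.
Qed.

Lemma gal_fixed_expn_eq n (xi : F) (d d' : K) :
  n.-primitive_root xi -> d != 0 -> sigma d = d -> d' ^+ n = d ^+ n ->
  sigma d' = d'.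
Proof.
move=> prim_xi d0 sd dd'.
have unity : (d' / d) ^+ n = 1 by rewrite expr_div_n dd' divff // expf_neq0.
by rewrite -(divfK d0 d') rmorphM /= sd (gal_fix_unity_root prim_xi unity).
Qed.

Lemma fixedField_cycle_prime (x : K) :
  prime (\dim {:K}) -> sigma x != x -> fixedField <[sigma]>%g = 1%VS.
Proof.
move=> /primeP[_ dvdK] sx; have := field_dimS (subvf (fixedField <[sigma]>%g)).
case/dvdK/orP=> /eqP dimE; first by apply/eqP; rewrite eq_sym eqEdim sub1v dimv1 dimE.
have fullE : fixedField <[sigma]>%g = fullv.
  by apply/eqP; rewrite eqEdim subvf dimE leqnn.
have : x \in fixedField <[sigma]>%g by rewrite fullE memvf.
case/mem_fixedFieldP=> _ /(_ sigma (cycle_id _)).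
by move/eqP; rewrite (negPf sx).
Qed.

Hypothesis fixed_base : fixedField <[sigma]>%g = 1%VS.

Lemma gal_cycle : 'Gal({:K} / 1)%g = <[sigma]>%g.
Proof. by rewrite -[RHS]genGid -gal_generated fixed_base. Qed.

Lemma order_gal_dim : #[sigma]%g = \dim {:K}.
Proof.
have dim_base : \dim (fixedField <[sigma]>%g) = 1%N by rewrite fixed_base dimv1.
have := galois_dim (fixedField_galois <[sigma]>%g).
by rewrite gal_generated genGid -orderE dim_base divn1.
Qed.

Lemma galNorm_cycle x : galNorm 1 {:K} x = \prod_(i < \dim {:K}) (sigma ^+ i)%g x.
Proof. by rewrite /galNorm gal_cycle prod_cycle order_gal_dim. Qed.

Lemma gal_fixed_in_base x : sigma x = x -> x \in 1%VS.
Proof.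
move=> sx; rewrite -fixed_base; apply/fixedFieldP; first exact: memvf.
move=> _ /cycleP[i ->]; elim: i => [|i IHi]; first by rewrite expg0 gal_id.
by rewrite gal_expgSr IHi.
Qed.

Definition partial_norm (k : K) i := \prod_(j < i) (sigma ^+ j)%g k.

Lemma partial_norm0 k : partial_norm k 0 = 1.
Proof. exact: big_ord0. Qed.

Lemma partial_normS k i : partial_norm k i.+1 = k * sigma (partial_norm k i).
Proof.
rewrite /partial_norm big_ord_recl expg0 gal_id rmorph_prod.
by congr (_ * _); apply: eq_bigr => j _; rewrite gal_expgSr.
Qed.

Lemma partial_norm_dim k : partial_norm k (\dim {:K}) = galNorm 1 {:K} k.
Proof. by rewrite galNorm_cycle. Qed.

Local Notation n := (\dim {:K}).

Section Twisted.
Variables (g k : K).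
Hypothesis twist : sigma g = g * k ^+ n.

Lemma gal_expg_twisted i : (sigma ^+ i)%g g = g * partial_norm k i ^+ n.
Proof.
elim: i => [|i IHi]; first by rewrite expg0 gal_id partial_norm0 expr1n mulr1.
rewrite gal_expgSr IHi rmorphM rmorphXn /= twist partial_normS exprMn.
by rewrite mulrA.
Qed.

Let norm_root := g * \prod_(i < n) partial_norm k i.

Lemma norm_root_expn : norm_root ^+ n = galNorm 1 {:K} g.
Proof.
rewrite galNorm_cycle; under eq_bigr do rewrite gal_expg_twisted.
by rewrite big_split prodr_const card_ord prodrXl exprMn.
Qed.

Lemma gal_norm_root : sigma norm_root = norm_root * galNorm 1 {:K} k.
Proof.
rewrite rmorphM rmorph_prod /= twist -mulrA -mulrA; congr (_ * _).
rewrite -[X in k ^+ X]card_ord -prodr_const -big_split /=.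
under eq_bigr do rewrite -partial_normS.
have recr : \prod_(i < n.+1) partial_norm k i =
    \prod_(i < n) partial_norm k i * partial_norm k n by rewrite big_ord_recr.
by rewrite -partial_norm_dim -recr big_ord_recl partial_norm0 mul1r.
Qed.

Lemma galNorm_twist_eq1 (xi : F) (d : K) :
  n.-primitive_root xi -> g != 0 -> d != 0 -> d ^+ n = galNorm 1 {:K} g ->
  sigma d = d -> galNorm 1 {:K} k = 1.
Proof.
move=> prim_xi g0 d0 dn sd.
have root0 : norm_root != 0.
  apply: contraTneq g0 => root0.
  by rewrite -(galNorm_eq0 1 {:K}) -norm_root_expn root0 expf_eq0 eqxx andbT adim_gt0.
have := gal_fixed_expn_eq prim_xi d0 sd (etrans norm_root_expn (esym dn)).
by rewrite gal_norm_root -{2}[norm_root]mulr1 => /(mulfI root0).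
Qed.

Lemma twisted_base_multiple :
  galNorm 1 {:K} k = 1 -> exists2 b : K, b != 0 & g * b ^+ n \in 1%VS.
Proof.
have gen : generator 'Gal({:K} / 1)%g sigma by rewrite /generator gal_cycle.
move=> /eqP/(Hilbert's_theorem_90 gen (memvf k))[b [_ b0] kb].
exists b => //; apply: gal_fixed_in_base.
by rewrite rmorphM rmorphXn /= twist kb -mulrA -exprMn divfK ?fmorph_eq0.
Qed.

End Twisted.
End CyclicGalois.

Theorem lemma4 (F : fieldType) (K : splittingFieldType F) (p : nat)
  (xi : F) (a : F) (alpha : K) (sigma : gal_of {:K}) (gamma : K) :
  prime p -> odd p ->
  p.-primitive_root xi ->
  a != 0 ->
  alpha ^+ p = a%:A ->
  <<1; alpha>>%VS = fullv ->
  \dim {:K} = p ->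
  sigma \in 'Gal({:K} / 1)%g ->
  sigma alpha = xi%:A * alpha ->
  gamma != 0 ->
  in_J1 p sigma gamma ->
  index_is p xi sigma gamma 0 ->
  exists f : F, f != 0 /\ Jeq p gamma f%:A.
Proof.
move=> pr_p _ prim_xi a0 alpha_p _ dimK _ s_alpha g0 [k [_ sg]] [d [d0 [dp sd]]].
have alpha0 : alpha != 0.
  have : alpha ^+ p != 0 by rewrite alpha_p scaler_eq0 oner_eq0 orbF.
  by apply: contraNneq => ->; rewrite expr0n gtn_eqF ?prime_gt0.
have xi1 : (xi%:A : K) != 1.
  rewrite -in_algE fmorph_eq1.
  by rewrite -[xi]expr1 -(prim_order_dvd prim_xi) dvdn1 eqn_leq leqNgt prime_gt1.
have fixed_base : fixedField <[sigma]>%g = 1%VS.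
  apply: (@fixedField_cycle_prime _ _ _ alpha); first by rewrite dimK.
  by rewrite s_alpha -{2}[alpha]mul1r (inj_eq (mulIf alpha0)).
subst p; have sd1 : sigma d = d by rewrite sd expr0 scale1r mul1r.
have Nk := galNorm_twist_eq1 fixed_base sg prim_xi g0 d0 dp sd1.
have [b b0 /vlineP[f ef]] := twisted_base_multiple fixed_base sg Nk.
have b0n : b ^+ \dim {:K} != 0 by rewrite expf_neq0.
exists f; split.
  by apply: contraNneq (mulf_neq0 g0 b0n) => f0; rewrite ef f0 scale0r.
exists b^-1; split; first by rewrite invr_eq0.
by rewrite -ef exprVn mulfK.
Qed.
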